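(* Let $p$ be any prime and $G=Z_{p^{\lambda_1}}\times\cdots\times Z_{p^{\lambda_n}}$ with $0<\lambda_1<\lambda_2<\cdots<\lambda_n$ (no repeated factors), and let $\mathbf a$ be a canonical tuple of $G$. Then $$O(\mathbf a)=\bigcup\{T(\mathbf b):\mathbf b\le\mathbf a\text{ and } b_i=a_i\text{ for each nondegenerate coordinate } i \text{ of }\mathbf a\}.$$
   Context: Set $\lambda_0=0$ and $a_0=0$ for any tuple. Tuples are ordered componentwise; $\Lambda(G)=\{\mathbf a\in\mathbb Z^n:\mathbf 0\le\mathbf a\le(\lambda_1,\dots,\lambda_n)\}$. For $\mathbf a\in\Lambda(G)$, $T(\mathbf a)$ is the set of $(g_1,\dots,g_n)\in G$ with $|g_i|=p^{a_i}$ for all $i$, and $O(\mathbf a)$ is the $\mathrm{Aut}(G)$-orbit containing $T(\mathbf a)$ (each type lies in a single orbit). A tuple $\mathbf a$ is canonical if (I) $a_i\ge a_{i-1}$ for $i\in\{2,\dots,n\}$ and (II) $a_{i+1}-a_i\le\lambda_{i+1}-\lambda_i$ for $i\in\{1,\dots,n-1\}$. A canonical $\mathbf a$ is degenerate at coordinate $i$ if $a_i=a_{i-1}$, or ($i\le n-1$ and) $a_{i+1}-a_i=\lambda_{i+1}-\lambda_i$; otherwise $i$ is nondegenerate. *)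

(* Coordinates are 1-indexed: 1..n, as in the paper.
   Tuples and group elements are functions nat -> nat; only coordinates 1..n matter
   (group elements are required to vanish outside 1..n, so equality is meaningful). *)
From mathcomp Require Import all_boot.
Set Implicit Arguments. Unset Strict Implicit. Unset Printing Implicit Defensive.

Definition coord (n i : nat) : bool := (1 <= i) && (i <= n).

Definition inG (p n : nat) (lam : nat -> nat) (g : nat -> nat) : Prop :=
  (forall i, coord n i -> g i < p ^ lam i) /\ (forall i, ~~ coord n i -> g i = 0).

Definition addG (p n : nat) (lam : nat -> nat) (g h : nat -> nat) : nat -> nat :=
  fun i => if coord n i then (g i + h i) %% p ^ lam i else 0.

Definition ordZ (m x : nat) : nat := m %/ gcdn x m.

Definition isAut (p n : nat) (lam : nat -> nat) (phi : (nat -> nat) -> (nat -> nat)) : Prop :=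
  [/\ (forall g, inG p n lam g -> inG p n lam (phi g)),
      (forall g h, inG p n lam g -> inG p n lam h ->
          phi (addG p n lam g h) = addG p n lam (phi g) (phi h)),
      (forall g h, inG p n lam g -> inG p n lam h -> phi g = phi h -> g = h) &
      (forall h, inG p n lam h -> exists2 g, inG p n lam g & phi g = h)].

Definition inLambda (n : nat) (lam a : nat -> nat) : Prop :=
  forall i, coord n i -> a i <= lam i.

Definition inT (p n : nat) (lam a : nat -> nat) (g : nat -> nat) : Prop :=
  inG p n lam g /\ forall i, coord n i -> ordZ (p ^ lam i) (g i) = p ^ a i.

(* O(a) : the Aut(G)-orbit containing T(a), i.e. the union of the orbits of elements of T(a)
   (T(a) lies in a single orbit, so this is that orbit). *)
Definition inO (p n : nat) (lam a : nat -> nat) (h : nat -> nat) : Prop :=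
  exists phi, exists2 g, isAut p n lam phi /\ inT p n lam a g & h = phi g.

(* convention a_0 = 0 *)
Definition ext0 (a : nat -> nat) (i : nat) : nat := if i == 0 then 0 else a i.

(* canonical tuple: (I) a_i >= a_{i-1} for 2<=i<=n, (II) a_{i+1}-a_i <= lam_{i+1}-lam_i for 1<=i<=n-1
   ((II) written without truncated subtraction) *)
Definition canonical (n : nat) (lam a : nat -> nat) : Prop :=
  (forall i, 2 <= i <= n -> a i.-1 <= a i) /\
  (forall i, 1 <= i < n -> a i.+1 + lam i <= lam i.+1 + a i).

Definition degenerate (n : nat) (lam a : nat -> nat) (i : nat) : Prop :=
  a i = ext0 a i.-1 \/ (i < n /\ a i.+1 + lam i = lam i.+1 + a i).

From Pilot Require Import Defs.
From mathcomp Require Import all_boot zify.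
From Stdlib Require Import FunctionalExtensionality Classical IndefiniteDescription.
Set Implicit Arguments. Unset Strict Implicit. Unset Printing Implicit Defensive.

(* If g has type a, then by (I) and (II) every coordinate of p^(a_i) g is divisible
   by p^(lam_i), i.e. p^(a_i) g = p^(lam_i) z; hence p^(a_i) phi(g) = p^(lam_i) phi(z)
   vanishes in coordinate i, so b_i <= a_i for the type b of phi(g).  At a
   nondegenerate coordinate the inequalities behind this are strict, and the same
   argument applied to phi^-1 and p^(a_i - 1) shows that b_i < a_i is impossible.
   Conversely, a coordinate with b_i < a_i is degenerate and therefore has a
   nondegenerate pivot s, with a_s = a_i (s < i) or a_s - lam_s = a_i - lam_i (s > i);
   the transvection x_i |-> x_i + c_i x_s, with c_i = p^(lam_i - lam_s) or 1, lifts
   the order of h_i to p^(a_i), and it is invertible because pivots are fixed. *)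

Lemma ordZ_dvd m x t : 0 < m -> (ordZ m x %| t) = (m %| t * x).
Proof.
move=> m_gt0; rewrite /ordZ.
have g_gt0 : 0 < gcdn x m by rewrite gcdn_gt0 m_gt0 orbT.
set g := gcdn x m.
have Em : m = m %/ g * g by rewrite divnK // dvdn_gcdr.
have Ex : x = x %/ g * g by rewrite divnK // dvdn_gcdl.
have cop : coprime (m %/ g) (x %/ g).
  rewrite /coprime -(eqn_pmul2r g_gt0) mul1n muln_gcdl -Em -Ex gcdnC.
  by rewrite eqxx.
by rewrite {2}Em {1}Ex mulnA dvdn_pmul2r // Gauss_dvdl.
Qed.

Lemma modn_mulr_dvd d q c u : d %| c * q -> c * (u %% q) = c * u %[mod d].
Proof.
move=> dv; rewrite {2}(divn_eq u q) mulnDr mulnCA -modnDml.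
by rewrite (eqP (dvdn_mull _ dv)) add0n.
Qed.

Lemma pexp_gt0 p l : prime p -> 0 < p ^ l.
Proof. by move=> pp; rewrite expn_gt0 prime_gt0. Qed.

Section PrimePowerOrder.

Variable p : nat.
Hypothesis p_prime : prime p.

Lemma ordZ_pexp l x : exists2 e, e <= l & ordZ (p ^ l) x = p ^ e.
Proof. by apply/dvdn_pfactor => //; rewrite ordZ_dvd ?pexp_gt0 // dvdn_mulr. Qed.

Lemma dvdn_ordZ m k x e : ordZ (p ^ m) x = p ^ e -> (p ^ m %| p ^ k * x) = (e <= k).
Proof.
by move=> ox; rewrite -ordZ_dvd ?pexp_gt0 // ox dvdn_Pexp2l // prime_gt1.
Qed.

Lemma dvdn_pexpM_ordZ l m k x e : l <= k + m -> ordZ (p ^ m) x = p ^ e ->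
  (p ^ l %| p ^ k * x) = (e + l <= k + m).
Proof.
move=> lkm ox; have E : k + m = (k + m - l) + l by lia.
rewrite -(dvdn_pmul2r (pexp_gt0 m p_prime)) mulnAC -!expnD E (expnD p _ l).
rewrite (expnD p l) mulnC mulnAC dvdn_pmul2r ?pexp_gt0 //.
by rewrite (dvdn_ordZ _ ox) leq_add2r.
Qed.

Lemma dvdn_modn_ordZ l m k x e : ordZ (p ^ m) x = p ^ e ->
  e <= k \/ e + l <= k + m -> p ^ l %| (p ^ k * x) %% p ^ m.
Proof.
move=> ox cmp; have [ek | ke] := leqP e k.
  by move: ek; rewrite -(dvdn_ordZ k ox) => /eqP ->.
have lm : l <= m by lia.
rewrite /dvdn (modn_dvdm _ (dvdn_exp2l p lm)) -/(dvdn _ _) (dvdn_pexpM_ordZ _ ox); lia.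
Qed.

Lemma ordZ_pexp_eq l x e : 0 < e -> p ^ l %| p ^ e * x -> ~~ (p ^ l %| p ^ e.-1 * x) ->
  ordZ (p ^ l) x = p ^ e.
Proof.
have [f _ ox] := ordZ_pexp l x.
by rewrite ox !(dvdn_ordZ _ ox) => e_gt0 fe /negP fe'; congr (_ ^ _); lia.
Qed.

End PrimePowerOrder.

Section CanonicalTuples.

Variables (n : nat) (lam a : nat -> nat).
Hypothesis lam_incr : forall i, 1 <= i < n -> lam i < lam i.+1.
Hypothesis a_can : canonical n lam a.

Lemma coord_homo (T : Type) (f : nat -> T) (r : T -> T -> Prop) :
  (forall x, r x x) -> (forall y x z, r x y -> r y z -> r x z) ->
  (forall i, 1 <= i < n -> r (f i) (f i.+1)) ->
  forall i j, coord n i -> coord n j -> i <= j -> r (f i) (f j).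
Proof.
move=> r_refl r_trans r_step i j ci cj.
apply: (@homo_leq_in T (coord n) f r r_refl r_trans) => //.
- by move=> u v; rewrite !unfold_in /coord => cu cv w; lia.
- by move=> u; rewrite !unfold_in /coord => cu cu1; apply: r_step; lia.
Qed.

Lemma lam_mono i j : coord n i -> coord n j -> i <= j -> lam i <= lam j.
Proof.
apply: (coord_homo (f := lam) (r := fun x y => x <= y)) => // [y x z|k /lam_incr/ltnW //].
exact: leq_trans.
Qed.

Lemma canonical_mono i j : coord n i -> coord n j -> i <= j -> a i <= a j.
Proof.
apply: (coord_homo (f := a) (r := fun x y => x <= y)) => // [y x z|k k_lt].
  exact: leq_trans.
by case: a_can => incr _; apply: (incr k.+1); lia.
Qed.

Lemma canonical_slope i j : coord n i -> coord n j -> i <= j ->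
  a j + lam i <= a i + lam j.
Proof.
apply: (coord_homo (f := id) (r := fun i j => a j + lam i <= a i + lam j)) => //.
- by move=> y x z; lia.
- by case: a_can => _ slope k /slope; lia.
Qed.

Lemma canonical_cmp i j : coord n i -> coord n j ->
  a j <= a i \/ a j + lam i <= a i + lam j.
Proof.
move=> ci cj; have [ji | ij] := leqP j i.
  by left; apply: canonical_mono.
by right; apply: canonical_slope => //; exact: ltnW.
Qed.

Lemma nondegenerate_cmp i j : coord n i -> coord n j -> j != i ->
  ~ degenerate n lam a i -> a j < a i \/ a j + lam i < a i + lam j.
Proof.
move=> ci cj ji ndeg; case: a_can => incr slope.
have [lt_ji | lt_ij | eq_ji] := ltngtP j i; last by rewrite eq_ji eqxx in ji.
- left; have i2 : 2 <= i <= n by move: ci cj; rewrite /coord; lia.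
  have aj : a j <= a i.-1 by apply: canonical_mono; move: ci cj; rewrite /coord; lia.
  have : a i <> a i.-1 by move=> E; apply: ndeg; left; rewrite /ext0 ifN_eq //; lia.
  by have := incr i i2; lia.
- right; have cj1 : coord n i.+1 by move: ci cj; rewrite /coord; lia.
  have := canonical_slope cj1 cj lt_ij; have := slope i.
  have : a i.+1 + lam i <> lam i.+1 + a i.
    by move=> E; apply: ndeg; right; split=> //; move: cj1; rewrite /coord; lia.
  by move: ci cj; rewrite /coord; lia.
Qed.

Definition pivot i s := (s < i /\ a s = a i) \/ (i < s /\ a s + lam i = a i + lam s).

Lemma degenerate_pivot i : coord n i -> 0 < a i -> degenerate n lam a i ->
  exists s, [/\ coord n s, ~ degenerate n lam a s & pivot i s].
Proof.
move=> /andP[i_gt0 i_le] ai_gt0.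
case=> [left_deg | [i_lt right_deg]].
- have i1 : 1 < i by move: left_deg; rewrite /ext0; case: eqP => //; lia.
  have ai1 : a i.-1 = a i by move: left_deg; rewrite /ext0 ifN_eq //; lia.
  have ex : exists s, (0 < s) && (a s == a i) by exists i.-1; rewrite ai1 eqxx; lia.
  case: (ex_minnP ex) => s /andP[s_gt0 /eqP as_ai] s_min.
  have s_lt : s < i by have := s_min i.-1; rewrite ai1 eqxx andbT; lia.
  exists s; split; [by rewrite /coord; lia| |by left].
  case=> [|[s_ltn right_s]]; rewrite /ext0.
    by case: eqP => [|s1 E]; [lia|have := s_min s.-1; rewrite -E as_ai eqxx; lia].
  have : lam s < lam s.+1 by apply: lam_incr; lia.
  have : a s.+1 <= a i by apply: canonical_mono; rewrite /coord; lia.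
  lia.
- pose P s := (i <= s <= n) && (a s + lam i == a i + lam s).
  have ex : exists s, P s by exists i; rewrite /P eqxx; lia.
  have bnd s : P s -> s <= n by case/andP; lia.
  case: (ex_maxnP ex bnd) => s /andP[s_range /eqP as_ai] s_max.
  have s_gt : i < s by have := s_max i.+1; rewrite /P; lia.
  exists s; split; [by rewrite /coord; lia| |by right].
  case=> [|[s_ltn right_s]]; last by have := s_max s.+1; rewrite /P; lia.
  rewrite /ext0 ifN_eq; last by lia.
  have : lam s.-1 < lam s by rewrite -{2}(prednK (ltn_trans i_gt0 s_gt)) lam_incr //; lia.
  have : a s.-1 + lam i <= a i + lam s.-1 by apply: canonical_slope; rewrite /coord; lia.
  lia.
Qed.

End CanonicalTuples.

Section Multiples.

Variables (p n : nat) (lam : nat -> nat).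
Hypothesis p_prime : prime p.
Local Notation G := (inG p n lam).
Local Notation addG := (addG p n lam).

Definition zeroG : nat -> nat := fun _ => 0.

Definition mulG m x := iter m (addG x) zeroG.

Definition additive psi :=
  (forall g, G g -> G (psi g)) /\
  (forall g h, G g -> G h -> psi (addG g h) = addG (psi g) (psi h)).

Lemma aut_additive phi : isAut p n lam phi -> additive phi.
Proof. by case. Qed.

Lemma mulG_coord m x i :
  mulG m x i = if coord n i then (m * x i) %% p ^ lam i else 0.
Proof.
elim: m => [|m IH] /=; first by case: coord; rewrite ?mod0n.
by rewrite /addG IH; case: coord => //; rewrite modnDmr mulSn.
Qed.

Lemma inG_zeroG : G zeroG.
Proof. by split=> i // _; apply: pexp_gt0. Qed.

Lemma inG_addG g h : G (addG g h).
Proof.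
split=> i; rewrite /Defs.addG; last by move/negbTE=> ->.
by move=> ->; rewrite ltn_pmod ?pexp_gt0.
Qed.

Lemma inG_mulG m x : G (mulG m x).
Proof. by case: m => [|m]; [exact: inG_zeroG | exact: inG_addG]. Qed.

Lemma additive_zeroG psi : additive psi -> psi zeroG = zeroG.
Proof.
move=> [Gpsi Apsi]; have [lt0 out0] := Gpsi _ inG_zeroG.
have zz : addG zeroG zeroG = zeroG.
  by apply: functional_extensionality => i; rewrite /Defs.addG mod0n; case: coord.
have E := Apsi _ _ inG_zeroG inG_zeroG; rewrite zz in E.
apply: functional_extensionality => i; rewrite {2}/zeroG.
case ci: (coord n i); last by rewrite out0 ?ci.
have := f_equal (fun f => f i) E; rewrite /= /Defs.addG ci => Ei.
have : psi zeroG i + psi zeroG i == psi zeroG i + 0 %[mod p ^ lam i].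
  by rewrite addn0 -Ei modn_small ?lt0.
by rewrite eqn_modDl mod0n modn_small ?lt0 // => /eqP.
Qed.

Lemma additive_mulG psi m x : additive psi -> G x ->
  psi (mulG m x) = mulG m (psi x).
Proof.
move=> ad Gx; elim: m => [|m IH]; first exact: additive_zeroG.
case: ad => _ Apsi; rewrite /mulG /= -/(mulG m x) -/(mulG m (psi x)) -IH.
exact: Apsi (inG_mulG m x).
Qed.

Lemma mulG_of_dvdn d y : G y -> (forall j, d %| y j) -> exists2 z, G z & y = mulG d z.
Proof.
move=> [y_lt y_out] dy; exists (fun j => y j %/ d).
  split=> j cj; last by rewrite y_out ?div0n.
  exact: leq_ltn_trans (leq_div _ _) (y_lt _ cj).
apply: functional_extensionality => j; rewrite mulG_coord.
case: ifP => cj; last by rewrite y_out ?cj.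
by rewrite mulnC divnK // modn_small ?y_lt.
Qed.

Lemma dvdn_coord_of_mulG d m z x i : G x -> d %| p ^ lam i ->
  mulG m x = mulG d z -> d %| m * x i.
Proof.
move=> [_ x_out] dl E; case ci: (coord n i); last by rewrite x_out ?ci // muln0.
have := f_equal (fun f => f i) E; rewrite !mulG_coord ci => Ei.
by rewrite /dvdn -(modn_dvdm _ dl) Ei modn_dvdm // modnMr.
Qed.

Lemma additive_dvdn_coord psi d m x i : additive psi -> G x -> d %| p ^ lam i ->
  (forall j, d %| mulG m x j) -> d %| m * psi x i.
Proof.
move=> ad Gx dl dmx; have [z Gz E] := mulG_of_dvdn (inG_mulG m x) dmx.
apply: (@dvdn_coord_of_mulG d m (psi z)) => //; first by case: ad => Gpsi _; apply: Gpsi.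
by rewrite -!additive_mulG // E.
Qed.

Lemma aut_dvdn_coord phi d m x i : isAut p n lam phi -> G x -> d %| p ^ lam i ->
  (forall j, d %| mulG m (phi x) j) -> d %| m * x i.
Proof.
move=> A Gx dl dmx; have [_ _ inj surj] := A.
have [z Gz E] := mulG_of_dvdn (inG_mulG m (phi x)) dmx.
have [w Gw Ew] := surj z Gz.
apply: (dvdn_coord_of_mulG Gx dl (z := w)); apply: inj; [exact: inG_mulG | exact: inG_mulG |].
by rewrite !additive_mulG ?E ?Ew //; apply: aut_additive.
Qed.

End Multiples.

Section Transvections.

Variables (p n : nat) (lam : nat -> nat).
Hypothesis p_prime : prime p.
Local Notation G := (inG p n lam).
Local Notation addG := (addG p n lam).

Definition transvec (c s : nat -> nat) x : nat -> nat :=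
  fun i => if coord n i then (x i + c i * x (s i)) %% p ^ lam i else 0.

Definition admissible c s := forall i, coord n i ->
  [/\ coord n (s i), c (s i) = 0 & p ^ lam i %| c i * p ^ lam (s i)].

(* c_i (p^(lam_i) - 1) stands for -c_i modulo p^(lam_i). *)
Definition inv_coef c i := c i * (p ^ lam i).-1.

Lemma inG_transvec c s x : G (transvec c s x).
Proof.
split=> i; rewrite /transvec; last by move/negbTE=> ->.
by move=> ->; rewrite ltn_pmod ?pexp_gt0.
Qed.

Lemma admissible_inv c s : admissible c s -> admissible (inv_coef c) s.
Proof.
move=> adm i ci; have [cs c_s dv] := adm i ci.
by split; rewrite /inv_coef ?c_s // mulnAC dvdn_mulr.
Qed.

Lemma transvec_addG c s x y : admissible c s ->
  transvec c s (addG x y) = addG (transvec c s x) (transvec c s y).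
Proof.
move=> adm; apply: functional_extensionality => i.
rewrite /transvec /Defs.addG; case ci: (coord n i) => //.
have [cs _ dv] := adm i ci; rewrite cs modnDm modnDml -modnDmr (modn_mulr_dvd _ dv).
by rewrite modnDmr mulnDr addnACA.
Qed.

Lemma transvec_comp c1 c2 s y : G y ->
  (forall i, coord n i -> [/\ coord n (s i), c2 (s i) = 0 & p ^ lam i %| c1 i + c2 i]) ->
  transvec c1 s (transvec c2 s y) = y.
Proof.
move=> [y_lt y_out] H; apply: functional_extensionality => i.
rewrite /transvec; case ci: (coord n i); last by rewrite y_out ?ci.
have [cs c2_s dv] := H i ci.
rewrite cs c2_s mul0n addn0 (modn_small (y_lt _ cs)) modnDml -addnA -mulnDl.
by rewrite (addnC (c2 i)) -modnDmr (eqP (dvdn_mulr _ dv)) addn0 modn_small ?y_lt.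
Qed.

Lemma addn_inv_coef c i : c i + inv_coef c i = c i * p ^ lam i.
Proof. by rewrite /inv_coef -{1}[c i]muln1 -mulnDr add1n prednK ?pexp_gt0. Qed.

Lemma transvecK c s y : admissible c s -> G y ->
  transvec (inv_coef c) s (transvec c s y) = y.
Proof.
move=> adm Gy; apply: transvec_comp => // i ci; have [cs c_s _] := adm i ci.
by rewrite addnC addn_inv_coef dvdn_mull.
Qed.

Lemma transvecVK c s y : admissible c s -> G y ->
  transvec c s (transvec (inv_coef c) s y) = y.
Proof.
move=> adm Gy; apply: transvec_comp => // i ci; have [cs c_s _] := adm i ci.
by rewrite /inv_coef c_s addn_inv_coef dvdn_mull.
Qed.

Lemma transvec_aut c s : admissible c s -> isAut p n lam (transvec c s).
Proof.
move=> adm; split=> [g _ | g h _ _ | g h Gg Gh E | y Gy]; first exact: inG_transvec.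
- exact: transvec_addG.
- by rewrite -(transvecK adm Gg) E transvecK.
- by exists (transvec (inv_coef c) s y); [exact: inG_transvec | exact: transvecVK].
Qed.

End Transvections.

Definition type_of p lam (x : nat -> nat) i := logn p (ordZ (p ^ lam i) (x i)).

Lemma inT_type_of p n lam x : prime p -> inG p n lam x -> inT p n lam (type_of p lam x) x.
Proof.
move=> pp Gx; split=> // i _; have [e _ ox] := ordZ_pexp pp (lam i) (x i).
by rewrite /type_of ox pfactorK.
Qed.

Section Orbits.

Variables (p n : nat) (lam a : nat -> nat).
Hypothesis p_prime : prime p.
Hypothesis lam_incr : forall i, 1 <= i < n -> lam i < lam i.+1.
Hypothesis a_can : canonical n lam a.
Local Notation T := (inT p n lam).

Lemma aut_type_le phi g b i : isAut p n lam phi -> T a g -> T b (phi g) -> coord n i ->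
  b i <= a i.
Proof.
move=> A [Gg g_ord] [_ h_ord] ci; rewrite -(dvdn_ordZ p_prime _ (h_ord i ci)).
apply: additive_dvdn_coord (aut_additive A) Gg (dvdnn _) _ => // j.
rewrite mulG_coord; case: ifP => cj //.
exact: dvdn_modn_ordZ (g_ord j cj) (canonical_cmp a_can ci cj).
Qed.

Lemma aut_type_nondegenerate phi g b i : isAut p n lam phi -> T a g -> T b (phi g) ->
  coord n i -> ~ degenerate n lam a i -> b i = a i.
Proof.
move=> A Ta Tb ci ndeg; have b_le j := aut_type_le A Ta Tb (i := j).
case: Ta Tb => [Gg g_ord] [_ h_ord].
apply/eqP; rewrite eqn_leq b_le //=; apply/negP => /negP; rewrite -ltnNge => b_lt.
have : p ^ lam i %| p ^ (a i).-1 * g i.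
  apply: aut_dvdn_coord A Gg (dvdnn _) _ => // j; rewrite mulG_coord.
  case: ifP => cj //; apply: (dvdn_modn_ordZ p_prime (h_ord j cj)).
  have [-> | ji] := eqVneq j i; first by left; lia.
  by have := b_le j cj; case: (nondegenerate_cmp a_can ci cj ji ndeg); lia.
by rewrite (dvdn_ordZ p_prime _ (g_ord i ci)); lia.
Qed.

(* For s < i, multiplication by p^(lam_i - lam_s) embeds Z_(p^lam_s) into Z_(p^lam_i). *)
Definition pivot_coef i s := if s < i then p ^ (lam i - lam s) else 1.

Lemma dvdn_pivot_coef i s : coord n i -> coord n s -> pivot lam a i s ->
  p ^ lam i %| pivot_coef i s * p ^ lam s.
Proof.
move=> ci cs piv; rewrite /pivot_coef; case: ifP => s_lt.
  by rewrite -expnD subnK // (lam_mono lam_incr) // ltnW.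
rewrite mul1n dvdn_exp2l // (lam_mono lam_incr) //; case: piv; lia.
Qed.

Lemma ordZ_pivot_shift h b i s : T b h -> coord n i -> coord n s ->
  b i < a i -> b s = a s -> pivot lam a i s ->
  ordZ (p ^ lam i) ((h i + pivot_coef i s * h s) %% p ^ lam i) = p ^ a i.
Proof.
move=> [_ h_ord] ci cs bi bs piv.
have dvd_k k : b i <= k ->
    (p ^ lam i %| p ^ k * ((h i + pivot_coef i s * h s) %% p ^ lam i)) = (a i <= k).
  move=> bk; rewrite /dvdn modnMmr -/(dvdn _ _) mulnDr dvdn_addr; last first.
    by rewrite (dvdn_ordZ p_prime _ (h_ord i ci)).
  rewrite /pivot_coef; case: ifP => s_lt.
    have ls : lam s <= lam i by rewrite (lam_mono lam_incr) // ltnW.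
    rewrite mulnA -expnD (dvdn_pexpM_ordZ p_prime _ (h_ord s cs)); last by lia.
    by apply/idP/idP; case: piv; lia.
  have ls : lam i <= lam s by rewrite (lam_mono lam_incr) //; case: piv; lia.
  rewrite mul1n (dvdn_pexpM_ordZ p_prime _ (h_ord s cs)); last by lia.
  by apply/idP/idP; case: piv; lia.
apply: (ordZ_pexp_eq p_prime); first by lia.
  by rewrite dvd_k // ltnW.
by rewrite dvd_k; lia.
Qed.

Lemma type_in_orbit b h : (forall i, coord n i -> b i <= a i) ->
  (forall i, coord n i -> ~ degenerate n lam a i -> b i = a i) -> T b h ->
  inO p n lam a h.
Proof.
move=> b_le b_nd Tb; pose sel i := coord n i && (b i < a i).
have [sf sfP] : exists sf, forall i, sel i ->
    [/\ coord n (sf i), b (sf i) = a (sf i) & pivot lam a i (sf i)].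
  apply: (@functional_choice nat nat
    (fun i t => sel i -> [/\ coord n t, b t = a t & pivot lam a i t])) => i.
  case: (boolP (sel i)) => [/andP[ci bi] | _]; last by exists 0.
  have dg : degenerate n lam a i by apply: NNPP => nd; rewrite b_nd ?ltnn in bi.
  have ai_gt0 : 0 < a i by apply: leq_ltn_trans bi.
  have [s [cs nds piv]] := degenerate_pivot lam_incr a_can ci ai_gt0 dg.
  by exists s => _; split=> //; exact: b_nd.
pose s i := if sel i then sf i else i.
pose c i := if sel i then pivot_coef i (sf i) else 0.
have adm : admissible p n lam c s.
  move=> i ci; rewrite /s /c; case si: (sel i); last by rewrite si.
  have [cs bs piv] := sfP i si.
  by rewrite /sel bs ltnn andbF; split=> //; exact: dvdn_pivot_coef.
exists (transvec p n lam (inv_coef p lam c) s); exists (transvec p n lam c s h).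
  split; first exact/transvec_aut/admissible_inv.
  split=> [|i ci]; first exact: inG_transvec.
  case: (Tb) => [[h_lt _] h_ord]; rewrite /transvec ci /s /c.
  case: ifP => [si | /negbT].
    have [cs bs piv] := sfP i si; have /andP[_ bi] := si.
    exact: ordZ_pivot_shift Tb ci cs bi bs piv.
  rewrite /sel ci -leqNgt => ab; rewrite mul0n addn0 modn_small ?h_lt // h_ord //.
  by congr (_ ^ _); apply/eqP; rewrite eqn_leq b_le.
by rewrite transvecK //; case: Tb.
Qed.

End Orbits.

Theorem mainTheorem6 (p n : nat) (lam a : nat -> nat) :
  prime p ->
  0 < lam 1 ->
  (forall i, 1 <= i < n -> lam i < lam i.+1) ->
  inLambda n lam a ->
  canonical n lam a ->
  forall h : nat -> nat,
    inO p n lam a h <->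
    exists b : nat -> nat,
      [/\ (forall i, coord n i -> b i <= a i),
          (forall i, coord n i -> ~ degenerate n lam a i -> b i = a i) &
          inT p n lam b h].
Proof.
move=> p_prime _ lam_incr _ a_can h; split=> [[phi [g [A Ta] ->]] | [b [b_le b_nd Tb]]].
- have [Gphi _ _ _] := A; have Tb := inT_type_of p_prime (Gphi g (proj1 Ta)).
  exists (type_of p lam (phi g)); split=> // i ci.
    exact: aut_type_le A Ta Tb ci.
  exact: aut_type_nondegenerate A Ta Tb ci.
- exact: type_in_orbit b_le b_nd Tb.
Qed.
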